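(* Let $n\ge 3$ and let $H:=\sum_{1\le i\ne j\le n}[X_{ij}(R),X_{ji}(R)]\subseteq \mathfrak{stl}_n(R)$ (the $K$-span of all brackets $[X_{ij}(a),X_{ji}(b)]$, $a,b\in R$). Then $H$ is a subalgebra of $\mathfrak{stl}_n(R)$ containing the center of $\mathfrak{stl}_n(R)$, $[H,X_{ij}(R)]\subseteq X_{ij}(R)$ for all $i\neq j$, and $$\mathfrak{stl}_n(R)=H\oplus\bigoplus_{1\le i\ne j\le n}X_{ij}(R)$$ as $K$-modules, where $X_{ij}(R)=\{X_{ij}(a):a\in R\}$.
   Context: $K$ is a unital commutative ring and $R$ is a unital associative $K$-algebra which is free as a $K$-module with a $K$-basis containing $1$. A Leibniz algebra over $K$ is a $K$-module $L$ with a $K$-bilinear bracket satisfying $[x,[y,z]]=[[x,y],z]-[[x,z],y]$ for all $x,y,z\in L$. The center of $L$ is $\{z\in L: [z,L]=[L,z]=0\}$. For $n\ge 3$, the Steinberg Leibniz algebra $\mathfrak{stl}_n(R)$ is the Leibniz algebra over $K$ generated by symbols $X_{ij}(a)$, $a\in R$, $1\le i\ne j\le n$, subject to: $X_{ij}(k_1a+k_2b)=k_1X_{ij}(a)+k_2X_{ij}(b)$ ($k_1,k_2\in K$); $[X_{ij}(a),X_{jk}(b)]=X_{ik}(ab)$ and $[X_{ij}(a),X_{ki}(b)]=-X_{kj}(ba)$ for distinct $i,j,k$; $[X_{ij}(a),X_{kl}(b)]=0$ for $j\ne k$, $i\ne l$. *)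

From HB Require Import structures.
From mathcomp Require Import all_boot all_order all_algebra.
Set Implicit Arguments.
Unset Strict Implicit.
Unset Printing Implicit Defensive.
Import GRing.Theory.
Local Open Scope ring_scope.

Definition free_with_basis_one (K : comPzRingType) (R : algType K) : Prop :=
  exists B : R -> Prop,
    B 1 /\
    (forall (s : seq R) (c : R -> K), uniq s -> (forall x, x \in s -> B x) ->
       \sum_(x <- s) c x *: x = 0 -> forall x, x \in s -> c x = 0) /\
    (forall r : R, exists (s : seq R) (c : R -> K),
       (forall x, x \in s -> B x) /\ r = \sum_(x <- s) c x *: x).

Definition bilinear_bracket (K : comPzRingType) (L : lmodType K) (br : L -> L -> L) : Prop :=
  (forall (k : K) (x y z : L), br (k *: x + y) z = k *: br x z + br y z) /\
  (forall (k : K) (x y z : L), br z (k *: x + y) = k *: br z x + br z y).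

Definition leibniz_algebra (K : comPzRingType) (L : lmodType K) (br : L -> L -> L) : Prop :=
  bilinear_bracket br /\
  (forall x y z : L, br x (br y z) = br (br x y) z - br (br x z) y).

Definition leibniz_hom (K : comPzRingType) (L M : lmodType K)
    (brL : L -> L -> L) (brM : M -> M -> M) (f : L -> M) : Prop :=
  (forall (k : K) (x y : L), f (k *: x + y) = k *: f x + f y) /\
  (forall x y : L, f (brL x y) = brM (f x) (f y)).

(* Steinberg relations for a family X_ij(a), i <> j (values at i = j are irrelevant). *)
Definition steinberg_rel (K : comPzRingType) (R : algType K) (n : nat)
    (L : lmodType K) (br : L -> L -> L) (X : 'I_n -> 'I_n -> R -> L) : Prop :=
  (forall (i j : 'I_n) (k1 k2 : K) (a b : R), i != j ->
     X i j (k1 *: a + k2 *: b) = k1 *: X i j a + k2 *: X i j b) /\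
  (forall (i j k : 'I_n) (a b : R), i != j -> j != k -> i != k ->
     br (X i j a) (X j k b) = X i k (a * b)) /\
  (forall (i j k : 'I_n) (a b : R), i != j -> j != k -> i != k ->
     br (X i j a) (X k i b) = - X k j (b * a)) /\
  (forall (i j k l : 'I_n) (a b : R), i != j -> k != l -> j != k -> i != l ->
     br (X i j a) (X k l b) = 0).

(* (L, br, X) is the Steinberg Leibniz algebra stl_n(R): the Leibniz K-algebra
   presented by generators X_ij(a) (i <> j) and the Steinberg relations, given
   by its universal property. *)
Definition is_stl (K : comPzRingType) (R : algType K) (n : nat)
    (L : lmodType K) (br : L -> L -> L) (X : 'I_n -> 'I_n -> R -> L) : Prop :=
  leibniz_algebra br /\ steinberg_rel br X /\
  forall (M : lmodType K) (brM : M -> M -> M) (Y : 'I_n -> 'I_n -> R -> M),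
    leibniz_algebra brM -> steinberg_rel brM Y ->
    (exists f : L -> M, leibniz_hom br brM f /\
        forall (i j : 'I_n) (a : R), i != j -> f (X i j a) = Y i j a) /\
    (forall f g : L -> M, leibniz_hom br brM f -> leibniz_hom br brM g ->
        (forall (i j : 'I_n) (a : R), i != j -> f (X i j a) = Y i j a) ->
        (forall (i j : 'I_n) (a : R), i != j -> g (X i j a) = Y i j a) ->
        forall x, f x = g x).

Definition in_H (K : comPzRingType) (R : algType K) (n : nat)
    (L : lmodType K) (br : L -> L -> L) (X : 'I_n -> 'I_n -> R -> L) (x : L) : Prop :=
  exists s : seq (K * ('I_n * 'I_n) * (R * R)),
    (forall t, t \in s -> t.1.2.1 != t.1.2.2) /\
    x = \sum_(t <- s) t.1.1 *: br (X t.1.2.1 t.1.2.2 t.2.1) (X t.1.2.2 t.1.2.1 t.2.2).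

Definition in_center (K : comPzRingType) (L : lmodType K) (br : L -> L -> L) (z : L) : Prop :=
  forall y : L, br z y = 0 /\ br y z = 0.

From HB Require Import structures.
From mathcomp Require Import all_boot all_order all_algebra.
From mathcomp Require Import boolp.
Set Implicit Arguments.
Unset Strict Implicit.
Unset Printing Implicit Defensive.
Import GRing.Theory.
Local Open Scope ring_scope.

(* Each bracket of two generators lies in some X_ij(R) or is a generator of H,
   and the Leibniz identity gives [H, X_ij(R)] <= X_ij(R); for the two
   positions (i, j) = (l, k), (k, l) opposite to a generator [X_kl(a), X_lk(b)]
   one first splits X_ij(c) = [X_im(c), X_mj(1)] through a third index m.
   Hence H + sum X_ij(R) is a subalgebra containing the generators, i.e. all of
   stl_n(R).  Sending X_ij(a) to a e_ij gives a representation in matrices over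
   R with the commutator bracket, under which H becomes diagonal while the
   X_ij(R) occupy the off-diagonal entries; this proves that the sum is direct
   and, bracketing a central element with X_rs(1), that the centre lies in H. *)

Section Commutator.
Variable T : pzRingType.

Definition commr (x y : T) := x * y - y * x.

Lemma commrBr x y z : commr x (y - z) = commr x y - commr x z.
Proof.
by rewrite /commr mulrBl mulrBr !opprB addrACA [RHS]addrACA [- (x * z) - _]addrC.
Qed.

Lemma commrMr x y z : commr x (y * z) = commr x y * z + y * commr x z.
Proof. by rewrite /commr mulrBl mulrBr !mulrA addrA subrK. Qed.

Lemma commr_leibniz x y z :
  commr x (commr y z) = commr (commr x y) z - commr (commr x z) y.
Proof.
rewrite [commr y z]/commr commrBr !commrMr [commr (commr x y) z]/commr.
rewrite [commr (commr x z) y]/commr opprD opprB [RHS]addrACA.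
by rewrite [- (z * _) - _]addrC.
Qed.

End Commutator.

(* Matrices over R are encoded as functions on index pairs, which inherit the
   K-module structure of R ('M[R]_n is only an R-module). *)
Section MatrixModel.
Variables (K : comPzRingType) (R : algType K) (n : nat).
Local Notation mxf := {ffun 'I_n * 'I_n -> R}.

Definition mx_of (A : mxf) : 'M[R]_n := \matrix_(i, j) A (i, j).
Definition mxf_of (M : 'M[R]_n) : mxf := [ffun p => M p.1 p.2].
Definition mxf_comm (A B : mxf) : mxf := mxf_of (commr (mx_of A) (mx_of B)).
Definition mxf_unit (i j : 'I_n) (a : R) : mxf :=
  [ffun p => if p == (i, j) then a else 0].

Lemma mxf_ofK : cancel mxf_of mx_of.
Proof. by move=> M; apply/matrixP => i j; rewrite !mxE ffunE. Qed.

Lemma mxf_ofB M N : mxf_of (M - N) = mxf_of M - mxf_of N.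
Proof. by apply/ffunP => p; rewrite !ffunE !mxE. Qed.

Lemma mxf_commE A B p : mxf_comm A B p =
  \sum_l A (p.1, l) * B (l, p.2) - \sum_l B (p.1, l) * A (l, p.2).
Proof.
by rewrite ffunE !mxE; congr (_ - _); apply: eq_bigr => l _; rewrite !mxE.
Qed.

Lemma mxf_comm_unitE A r s c p q : mxf_comm A (mxf_unit r s c) (p, q) =
  (if q == s then A (p, r) * c else 0) - (if p == r then c * A (s, q) else 0).
Proof.
rewrite mxf_commE /= (bigD1 r) // [X in _ - X](bigD1 s) //= !big1 ?addr0.
- rewrite !ffunE !xpair_eqE !eqxx /= andbT.
  by case: eqP; case: eqP; rewrite ?mulr0 ?mul0r.
- by move=> l hl; rewrite ffunE xpair_eqE (negbTE hl) andbF mul0r.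
- by move=> l hl; rewrite ffunE xpair_eqE (negbTE hl) mulr0.
Qed.

Lemma mxf_comm_unit_offdiag i j a b p : p.1 != p.2 ->
  mxf_comm (mxf_unit i j a) (mxf_unit j i b) p = 0.
Proof.
case: p => p q /= pq; rewrite mxf_comm_unitE !ffunE !xpair_eqE !eqxx andbT /=.
case: (eqVneq q i) pq => [-> | _] pq; case: (eqVneq p j) pq => [-> | _] pq.
all: by rewrite ?(negbTE pq) 1?eq_sym ?(negbTE pq) ?mul0r ?mulr0 ?subr0.
Qed.

Lemma mxf_scaleDE k (A B : mxf) p : (k *: A + B) p = k *: A p + B p.
Proof. by rewrite !ffunE. Qed.

Lemma mxf_comm_leibniz : leibniz_algebra mxf_comm.
Proof.
split; first split.
- move=> k A B C; apply/ffunP => p; rewrite mxf_scaleDE !mxf_commE.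
  under eq_bigr => l _ do rewrite mxf_scaleDE mulrDl -scalerAl.
  under [X in _ - X]eq_bigr => l _ do rewrite mxf_scaleDE mulrDr -scalerAr.
  by rewrite !big_split /= -!scaler_sumr scalerBr opprD addrACA.
- move=> k A B C; apply/ffunP => p; rewrite mxf_scaleDE !mxf_commE.
  under eq_bigr => l _ do rewrite mxf_scaleDE mulrDr -scalerAr.
  under [X in _ - X]eq_bigr => l _ do rewrite mxf_scaleDE mulrDl -scalerAl.
  by rewrite !big_split /= -!scaler_sumr scalerBr opprD addrACA.
by move=> A B C; rewrite /mxf_comm !mxf_ofK -mxf_ofB commr_leibniz.
Qed.

Lemma mxf_unit_steinberg : steinberg_rel mxf_comm mxf_unit.
Proof.
split; [|split; [|split]].
- move=> i j k1 k2 a b _; apply/ffunP => p; rewrite !ffunE.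
  by case: ifP; rewrite ?scaler0 ?addr0.
- move=> i j k a b ij jk ik; apply/ffunP => -[p q].
  rewrite mxf_comm_unitE !ffunE !xpair_eqE eqxx andbT (eq_sym k i) (negbTE ik) /=.
  by rewrite mulr0 if_same subr0; case: (p == i); case: (q == k); rewrite /= ?mul0r.
- move=> i j k a b ij jk ik; apply/ffunP => -[p q].
  rewrite mxf_comm_unitE !ffunE !xpair_eqE eqxx (eq_sym k j) (negbTE jk) andbF /=.
  rewrite mul0r if_same sub0r.
  by case: (p == k); case: (q == j); rewrite /= ?mulr0 ?oppr0.
- move=> i j k l a b ij kl jk il; apply/ffunP => -[p q].
  rewrite mxf_comm_unitE !ffunE !xpair_eqE (eq_sym k j) (negbTE jk) (eq_sym l i).
  by rewrite (negbTE il) !andbF mul0r mulr0 !if_same subr0.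
Qed.

End MatrixModel.

Section StlInduction.
Variables (K : comPzRingType) (R : algType K) (n : nat) (L : lmodType K)
  (br : L -> L -> L) (X : 'I_n -> 'I_n -> R -> L).
Hypothesis stl : is_stl br X.
Variable P : L -> Prop.
Hypotheses (P0 : P 0) (P_lin : forall k x y, P x -> P y -> P (k *: x + y))
  (P_br : forall x y, P x -> P y -> P (br x y))
  (P_X : forall i j a, i != j -> P (X i j a)).

(* The sub-Leibniz algebra cut out by P: the universal property yields a
   homomorphism into it whose composite with the inclusion is the identity. *)
Definition stl_pred : {pred L} := fun x => `[< P x >].

Lemma stl_predP x : reflect (P x) (x \in stl_pred).
Proof. by rewrite unfold_in; exact: asboolP. Qed.

Fact stl_pred_submod_closed : submod_closed stl_pred.
Proof.
split=> [|k x y /stl_predP Px /stl_predP Py]; apply/stl_predP; first exact: P0.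
exact: P_lin.
Qed.
HB.instance Definition _ := GRing.isSubmodClosed.Build K L stl_pred
  stl_pred_submod_closed.

Inductive stl_sub : predArgType := StlSub (x : L) of x \in stl_pred.
Definition stl_val u := let: StlSub x _ := u in x.
HB.instance Definition _ := [isSub of stl_sub for stl_val].
HB.instance Definition _ := [Choice of stl_sub by <:].
HB.instance Definition _ := [SubChoice_isSubZmodule of stl_sub by <:].
HB.instance Definition _ := [SubZmodule_isSubLmodule of stl_sub by <:].

Definition stl_sub_br (u v : stl_sub) : stl_sub := insubd 0 (br (val u) (val v)).
Definition stl_sub_X i j a : stl_sub := insubd 0 (X i j a).

Lemma stl_sub_brE u v : val (stl_sub_br u v) = br (val u) (val v).
Proof.
by rewrite val_insubd (introT (stl_predP _)) //; apply: P_br; exact/stl_predP/valP.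
Qed.

Lemma stl_sub_XE i j a : i != j -> val (stl_sub_X i j a) = X i j a.
Proof. by move=> ij; rewrite val_insubd (introT (stl_predP _)) //; exact: P_X. Qed.

Lemma stl_sub_leibniz : leibniz_algebra stl_sub_br.
Proof.
have [[[brZDl brZDr] jac] _] := stl.
split; [split|] => [k u v w|k u v w|u v w]; apply/val_inj;
  rewrite !(stl_sub_brE, GRing.valD, GRing.valZ, GRing.valN) ?stl_sub_brE;
  [exact: brZDl | exact: brZDr | exact: jac].
Qed.

Lemma stl_sub_steinberg : steinberg_rel stl_sub_br stl_sub_X.
Proof.
have [_ [[XZD [Xij [Xki Xkl]]] _]] := stl.
split; [|split; [|split]].
- move=> i j k1 k2 a b ij; apply/val_inj.
  by rewrite GRing.valD !GRing.valZ !stl_sub_XE //; exact: XZD.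
- move=> i j k a b ij jk ik; apply/val_inj.
  by rewrite stl_sub_brE !stl_sub_XE //; exact: Xij.
- move=> i j k a b ij jk ik; have kj : k != j by rewrite eq_sym.
  have ki : k != i by rewrite eq_sym.
  by apply/val_inj; rewrite stl_sub_brE GRing.valN !stl_sub_XE //; exact: Xki.
- move=> i j k l a b ij kl jk il; apply/val_inj.
  by rewrite stl_sub_brE !stl_sub_XE //; exact: Xkl.
Qed.

Lemma stl_induction x : P x.
Proof.
have [leib [rel univ]] := stl.
have [[f [[f_lin f_br] f_X]] _] := univ _ _ _ stl_sub_leibniz stl_sub_steinberg.
have [_ hom_unique] := univ _ _ _ leib rel.
have -> : x = val (f x).
  apply: (hom_unique id (val \o f)) => //.
  - by split=> [k u v|u v] /=; rewrite ?f_lin ?f_br ?GRing.valD ?GRing.valZ ?stl_sub_brE.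
  - by move=> i j a ij /=; rewrite f_X ?stl_sub_XE.
exact/stl_predP/valP.
Qed.
End StlInduction.

Lemma ord_avoid2 (n : nat) (k l : 'I_n) :
  (2 < n)%N -> exists m : 'I_n, (m != k) && (m != l).
Proof.
move=> n_gt2; case: (pickP [predC [set k; l]]) => [m | kl_full].
  by rewrite !inE negb_or => ?; exists m.
have : (#|[set: 'I_n]| <= #|[set k; l]|)%N.
  by apply/subset_leq_card/subsetP => m _; move/negbFE: (kl_full m).
by rewrite cardsT card_ord cards2 => /(leq_trans n_gt2); case: (k != l).
Qed.

Section Stl.
Variables (K : comPzRingType) (R : algType K) (n : nat) (L : lmodType K)
  (br : L -> L -> L) (X : 'I_n -> 'I_n -> R -> L).

Hypothesis br_bilinear : bilinear_bracket br.

Lemma brDl x y z : br (x + y) z = br x z + br y z.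
Proof. by have := br_bilinear.1 1 x y z; rewrite !scale1r. Qed.

Lemma brDr x y z : br z (x + y) = br z x + br z y.
Proof. by have := br_bilinear.2 1 x y z; rewrite !scale1r. Qed.

Lemma br0l z : br 0 z = 0.
Proof. by apply: (addrI (br 0 z)); rewrite addr0 -brDl addr0. Qed.

Lemma br0r z : br z 0 = 0.
Proof. by apply: (addrI (br z 0)); rewrite addr0 -brDr addr0. Qed.

Lemma brZl k x z : br (k *: x) z = k *: br x z.
Proof. by have := br_bilinear.1 k x 0 z; rewrite !addr0 br0l addr0. Qed.

Lemma brZr k x z : br z (k *: x) = k *: br z x.
Proof. by have := br_bilinear.2 k x 0 z; rewrite !addr0 br0r addr0. Qed.

Lemma br_suml (I : Type) (r : seq I) (P : pred I) (F : I -> L) z :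
  br (\sum_(i <- r | P i) F i) z = \sum_(i <- r | P i) br (F i) z.
Proof. by elim/big_rec2: _ => [|i a b _ <-]; [exact: br0l | exact: brDl]. Qed.

Lemma br_sumr (I : Type) (r : seq I) (P : pred I) (F : I -> L) z :
  br z (\sum_(i <- r | P i) F i) = \sum_(i <- r | P i) br z (F i).
Proof. by elim/big_rec2: _ => [|i a b _ <-]; [exact: br0r | exact: brDr]. Qed.

Hypothesis br_leibniz : forall x y z, br x (br y z) = br (br x y) z - br (br x z) y.

Lemma br_leibnizl x y z : br (br x y) z = br x (br y z) + br (br x z) y.
Proof. by rewrite br_leibniz subrK. Qed.

Hypothesis X_steinberg : steinberg_rel br X.

Lemma XD i j a b : i != j -> X i j (a + b) = X i j a + X i j b.
Proof. by move=> ij; have := X_steinberg.1 i j 1 1 a b ij; rewrite !scale1r. Qed.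

Lemma XZ i j k a : i != j -> X i j (k *: a) = k *: X i j a.
Proof. by move=> ij; have := X_steinberg.1 i j k 0 a 0 ij; rewrite !scale0r !addr0. Qed.

Lemma X0 i j : i != j -> X i j 0 = 0.
Proof. by move=> ij; have := XZ 0 0 ij; rewrite !scale0r. Qed.

Lemma XN i j a : i != j -> X i j (- a) = - X i j a.
Proof. by move=> ij; have := XZ (-1) a ij; rewrite !scaleN1r. Qed.

Lemma brXX_compose i j k a b : i != j -> j != k -> i != k ->
  br (X i j a) (X j k b) = X i k (a * b).
Proof. exact: X_steinberg.2.1. Qed.

Lemma brXX_compose_rev i j k a b : i != j -> j != k -> i != k ->
  br (X i j a) (X k i b) = X k j (- (b * a)).
Proof. by move=> ij jk ik; rewrite XN 1?X_steinberg.2.2.1 // eq_sym. Qed.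

Lemma brXX_disjoint i j k l a b : i != j -> k != l -> j != k -> i != l ->
  br (X i j a) (X k l b) = 0.
Proof. exact: X_steinberg.2.2.2. Qed.

Definition in_X i j x := exists a, x = X i j a.

Lemma in_X0 i j : i != j -> in_X i j 0.
Proof. by exists 0; rewrite X0. Qed.

Lemma in_X_lin i j k x y : i != j -> in_X i j x -> in_X i j y -> in_X i j (k *: x + y).
Proof. by move=> ij [a ->] [b ->]; exists (k *: a + b); rewrite XD ?XZ. Qed.

Lemma br_X_split h i j m c : i != j -> m != i -> m != j ->
  in_X i m (br h (X i m c)) -> in_X m j (br h (X m j 1)) -> in_X i j (br h (X i j c)).
Proof.
move=> ij mi mj [u hu] [v hv].
have im : i != m by rewrite eq_sym.
have ji : j != i by rewrite eq_sym.
have -> : X i j c = br (X i m c) (X m j 1) by rewrite brXX_compose ?mulr1.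
rewrite br_leibniz hu hv brXX_compose ?brXX_compose_rev ?mulr1 //.
by exists (u + c * v); rewrite XN // opprK -XD.
Qed.

Lemma br_brXX_X_generic k l i j a b c : k != l -> i != j ->
  (i, j) != (l, k) -> (i, j) != (k, l) ->
  in_X i j (br (br (X k l a) (X l k b)) (X i j c)).
Proof.
move=> kl; rewrite br_leibnizl !xpair_eqE.
have lk : l != k by rewrite eq_sym.
case: (eqVneq i l) => [-> | il] /=.
  move=> lj jk _; have kj : k != j by rewrite eq_sym.
  have jl : j != l by rewrite eq_sym.
  rewrite (brXX_disjoint _ _ lk) // br0r add0r.
  by rewrite brXX_compose // brXX_compose_rev //; eexists.
case: (eqVneq i k) => [-> | ik] /=.
  move=> kj _ jl; have lj : l != j by rewrite eq_sym.
  rewrite brXX_compose // brXX_compose //.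
  by rewrite (brXX_disjoint _ _ kl) // br0l addr0; eexists.
move=> ij _ _; have li : l != i by rewrite eq_sym.
have ki : k != i by rewrite eq_sym.
case: (eqVneq j k) => [-> | jk].
  rewrite (brXX_disjoint _ _ lk) // br0r add0r.
  by rewrite brXX_compose_rev // brXX_compose //; eexists.
case: (eqVneq j l) => [-> | jl].
  rewrite brXX_compose_rev // brXX_compose_rev //.
  by rewrite (brXX_disjoint _ _ kl) // br0l addr0; eexists.
have kj : k != j by rewrite eq_sym.
have lj : l != j by rewrite eq_sym.
rewrite (brXX_disjoint _ _ lk) // (brXX_disjoint _ _ kl) //.
by rewrite br0r br0l addr0; exact: in_X0.
Qed.

Hypothesis n_ge3 : (2 < n)%N.

Lemma br_brXX_X k l i j a b c : k != l -> i != j ->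
  in_X i j (br (br (X k l a) (X l k b)) (X i j c)).
Proof.
move=> kl ij; have [m /andP[mk ml]] := ord_avoid2 k l n_ge3.
have [special | ] := boolP (((i, j) == (l, k)) || ((i, j) == (k, l))); last first.
  by rewrite negb_or => /andP[]; exact: br_brXX_X_generic.
have [mi mj] : m != i /\ m != j by case/orP: special => /eqP[-> ->].
have im : i != m by rewrite eq_sym.
apply: (br_X_split ij mi mj); apply: br_brXX_X_generic;
  by rewrite // !xpair_eqE ?(negbTE mk) ?(negbTE ml) ?andbF.
Qed.

Lemma in_H0 : in_H br X 0.
Proof. by exists [::]; rewrite big_nil. Qed.

Lemma in_H_lin k x y : in_H br X x -> in_H br X y -> in_H br X (k *: x + y).
Proof.
move=> [s1 [s1_off ->]] [s2 [s2_off ->]].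
exists (map (fun t => (k * t.1.1, t.1.2, t.2)) s1 ++ s2); split.
  by move=> t; rewrite mem_cat => /orP[/mapP[t' /s1_off ? ->] | /s2_off].
rewrite big_cat big_map scaler_sumr; congr (_ + _); apply: eq_bigr => t _.
by rewrite scalerA.
Qed.

Lemma in_H_brXX i j a b : i != j -> in_H br X (br (X i j a) (X j i b)).
Proof.
move=> ij; exists [:: (1, (i, j), (a, b))]; split; last by rewrite big_seq1 scale1r.
by move=> t; rewrite inE => /eqP ->.
Qed.

Lemma in_H_ind (P : L -> Prop) : P 0 ->
    (forall k i j a b y, i != j -> P y -> P (k *: br (X i j a) (X j i b) + y)) ->
  forall h, in_H br X h -> P h.
Proof.
move=> P0 P_step h [s [s_off ->]]; elim: s s_off => [|t s IH] s_off.
  by rewrite big_nil.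
rewrite big_cons; apply: P_step; first exact/s_off/mem_head.
by apply: IH => t' t'_s; apply: s_off; rewrite inE t'_s orbT.
Qed.

Lemma in_H_br_X i j c h : i != j -> in_H br X h -> in_X i j (br h (X i j c)).
Proof.
move=> ij; move: h; apply: in_H_ind => [|k p q a b y pq IH].
  by rewrite br0l; exact: in_X0.
by rewrite brDl brZl; apply: in_X_lin => //; exact: br_brXX_X.
Qed.

Lemma in_H_br x y : in_H br X x -> in_H br X y -> in_H br X (br x y).
Proof.
move=> hx; move: y; apply: in_H_ind => [|k i j a b y ij IH].
  by rewrite br0r; exact: in_H0.
have ji : j != i by rewrite eq_sym.
rewrite brDr brZr; apply: in_H_lin => //; rewrite br_leibniz.
have [u ->] := in_H_br_X a ij hx; have [v ->] := in_H_br_X b ji hx.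
by rewrite addrC -scaleN1r; apply: in_H_lin; exact: in_H_brXX.
Qed.

Definition sumX (a : 'I_n * 'I_n -> R) : L :=
  \sum_(p : 'I_n * 'I_n | p.1 != p.2) X p.1 p.2 (a p).

Definition in_HX x := exists h a, in_H br X h /\ x = h + sumX a.

Lemma sumX_eq0 a : (forall p, p.1 != p.2 -> a p = 0) -> sumX a = 0.
Proof. by move=> a0; apply: big1 => p p_off; rewrite a0 ?X0. Qed.

Lemma sumX_lin k a b : sumX (fun p => k *: a p + b p) = k *: sumX a + sumX b.
Proof.
by rewrite /sumX scaler_sumr -big_split; apply: eq_bigr => p p_off; rewrite XD ?XZ.
Qed.

Lemma sumX_unit i j c : i != j -> sumX (fun p => if p == (i, j) then c else 0) = X i j c.
Proof.
move=> ij; rewrite /sumX (bigD1 (i, j)) //= eqxx big1 ?addr0 // => p /andP[p_off].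
by move=> /negbTE->; rewrite X0.
Qed.

Lemma in_HX0 : in_HX 0.
Proof. by exists 0, (fun _ => 0); rewrite sumX_eq0 ?addr0; split => //; exact: in_H0. Qed.

Lemma in_HX_lin k x y : in_HX x -> in_HX y -> in_HX (k *: x + y).
Proof.
move=> [h [a [hH ->]]] [h' [a' [h'H ->]]].
exists (k *: h + h'), (fun p => k *: a p + a' p); split; first exact: in_H_lin.
by rewrite sumX_lin scalerDr addrACA.
Qed.

Lemma in_HXD x y : in_HX x -> in_HX y -> in_HX (x + y).
Proof. by move=> hx hy; rewrite -[x]scale1r; exact: in_HX_lin. Qed.

Lemma in_HXB x y : in_HX x -> in_HX y -> in_HX (x - y).
Proof. by move=> hx hy; rewrite addrC -scaleN1r; exact: in_HX_lin. Qed.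

Lemma in_HX_sum (I : Type) (r : seq I) (P : pred I) (F : I -> L) :
  (forall i, P i -> in_HX (F i)) -> in_HX (\sum_(i <- r | P i) F i).
Proof. by move=> hF; apply: big_ind => //; [exact: in_HX0 | exact: in_HXD]. Qed.

Lemma in_HX_H h : in_H br X h -> in_HX h.
Proof. by move=> hH; exists h, (fun _ => 0); rewrite sumX_eq0 ?addr0. Qed.

Lemma in_HX_X i j c : i != j -> in_HX (X i j c).
Proof.
move=> ij; exists 0, (fun p => if p == (i, j) then c else 0).
by rewrite sumX_unit // add0r; split => //; exact: in_H0.
Qed.

Lemma in_HX_brXX p q r s a c : p != q -> r != s -> in_HX (br (X p q a) (X r s c)).
Proof.
move=> pq rs; case: (eqVneq q r) => [qr | qr].
  subst r; case: (eqVneq p s) => [ps | ps]; first by subst s; exact/in_HX_H/in_H_brXX.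
  by rewrite brXX_compose //; exact: in_HX_X.
case: (eqVneq p s) => [ps | ps].
  subst s; have pr : p != r by rewrite eq_sym.
  by rewrite brXX_compose_rev //; apply: in_HX_X; rewrite eq_sym.
by rewrite brXX_disjoint //; exact: in_HX0.
Qed.

Lemma in_HX_br_X x i j c : i != j -> in_HX x -> in_HX (br x (X i j c)).
Proof.
move=> ij [h [a [hH ->]]]; rewrite brDl; apply: in_HXD.
  by have [b ->] := in_H_br_X c ij hH; exact: in_HX_X.
by rewrite br_suml; apply: in_HX_sum => p p_off; exact: in_HX_brXX.
Qed.

Lemma in_HX_brXH p q a h : p != q -> in_H br X h -> in_HX (br (X p q a) h).
Proof.
move=> pq; move: h; apply: in_H_ind => [|k i j b c y ij IH].
  by rewrite br0r; exact: in_HX0.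
have ji : j != i by rewrite eq_sym.
rewrite brDr brZr br_leibniz; apply: in_HX_lin => //.
by apply: in_HXB; apply: in_HX_br_X => //; exact: in_HX_brXX.
Qed.

Lemma in_HX_br x y : in_HX x -> in_HX y -> in_HX (br x y).
Proof.
move=> hx [h [a [hH ->]]]; rewrite brDr; apply: in_HXD; last first.
  by rewrite br_sumr; apply: in_HX_sum => p p_off; exact: in_HX_br_X.
case: hx => [h' [a' [h'H ->]]]; rewrite brDl; apply: in_HXD.
  exact/in_HX_H/in_H_br.
by rewrite br_suml; apply: in_HX_sum => p p_off; exact: in_HX_brXH.
Qed.

Lemma in_HX_all : is_stl br X -> forall x, in_HX x.
Proof.
move=> stl; apply: (stl_induction stl in_HX0 in_HX_lin in_HX_br).
exact: in_HX_X.
Qed.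

Lemma exists_mxf_rep : is_stl br X ->
  exists f : L -> {ffun 'I_n * 'I_n -> R}, leibniz_hom br (@mxf_comm K R n) f /\
    forall i j a, i != j -> f (X i j a) = mxf_unit i j a.
Proof.
case=> _ [_ univ].
by case: (univ _ _ _ (@mxf_comm_leibniz K R n) (@mxf_unit_steinberg K R n)).
Qed.

Section MatrixRepresentation.
Variable f : L -> {ffun 'I_n * 'I_n -> R}.
Hypothesis f_hom : leibniz_hom br (@mxf_comm K R n) f.
Hypothesis f_X : forall i j a, i != j -> f (X i j a) = mxf_unit i j a.

Lemma rep0 : f 0 = 0.
Proof.
have := f_hom.1 1 0 0; rewrite !scale1r addr0 => f0D.
by apply: (addrI (f 0)); rewrite addr0 -f0D.
Qed.

Lemma repD x y : f (x + y) = f x + f y.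
Proof. by have := f_hom.1 1 x y; rewrite !scale1r. Qed.

Lemma rep_sum (I : Type) (r : seq I) (P : pred I) (F : I -> L) :
  f (\sum_(i <- r | P i) F i) = \sum_(i <- r | P i) f (F i).
Proof. by elim/big_rec2: _ => [|i u v _ <-]; [exact: rep0 | exact: repD]. Qed.

Lemma rep_H_offdiag h p : in_H br X h -> p.1 != p.2 -> f h p = 0.
Proof.
move=> hH p_off; move: h hH; apply: in_H_ind => [|k i j a b y ij IH].
  by rewrite rep0 ffunE.
have ji : j != i by rewrite eq_sym.
by rewrite f_hom.1 f_hom.2 !f_X // mxf_scaleDE mxf_comm_unit_offdiag // IH scaler0 addr0.
Qed.

Lemma rep_sumX a p : p.1 != p.2 -> f (sumX a) p = a p.
Proof.
move=> p_off; rewrite rep_sum sum_ffunE (bigD1 p) //= big1 ?addr0.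
  by rewrite f_X // ffunE -surjective_pairing eqxx.
move=> q /andP[q_off qp]; rewrite f_X // ffunE -surjective_pairing.
by rewrite eq_sym (negbTE qp).
Qed.

Lemma rep_HX_offdiag h a p : in_H br X h -> p.1 != p.2 -> f (h + sumX a) p = a p.
Proof. by move=> hH p_off; rewrite repD ffunE rep_H_offdiag // rep_sumX // add0r. Qed.

End MatrixRepresentation.

Lemma HX_direct h a : is_stl br X -> in_H br X h -> h + sumX a = 0 ->
  forall p, p.1 != p.2 -> a p = 0.
Proof.
move=> stl hH ha0 p p_off; have [f [f_hom f_X]] := exists_mxf_rep stl.
by rewrite -(rep_HX_offdiag f_hom f_X a hH p_off) ha0 (rep0 f_hom) ffunE.
Qed.

Lemma in_H_center z : is_stl br X -> in_center br z -> in_H br X z.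
Proof.
move=> stl z_center; have [h [a [hH z_eq]]] := in_HX_all stl z.
suff a0 : forall p, p.1 != p.2 -> a p = 0 by rewrite z_eq sumX_eq0 ?addr0.
move=> [p r] /= pr; have [f [f_hom f_X]] := exists_mxf_rep stl.
have [s /andP[sr _]] := ord_avoid2 r r n_ge3; have rs : r != s by rewrite eq_sym.
have := congr1 (fun A => f A (p, s)) (z_center (X r s 1)).1.
rewrite /= f_hom.2 f_X // (rep0 f_hom) mxf_comm_unitE eqxx (negbTE pr) mulr1 subr0 ffunE.
by rewrite z_eq (rep_HX_offdiag f_hom f_X).
Qed.
End Stl.

Theorem lemma2p5 (K : comPzRingType) (R : algType K) (n : nat)
    (L : lmodType K) (br : L -> L -> L) (X : 'I_n -> 'I_n -> R -> L) :
  (3 <= n)%N ->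
  free_with_basis_one R ->
  is_stl br X ->
  ((in_H br X 0 /\
    (forall (k : K) (x y : L), in_H br X x -> in_H br X y -> in_H br X (k *: x + y)) /\
    (forall x y : L, in_H br X x -> in_H br X y -> in_H br X (br x y))) /\
   (forall z : L, in_center br z -> in_H br X z) /\
   (forall (i j : 'I_n) (h : L) (a : R), i != j -> in_H br X h ->
      exists b : R, br h (X i j a) = X i j b) /\
   (forall x : L, exists (h : L) (a : 'I_n * 'I_n -> R), in_H br X h /\
      x = h + \sum_(p : 'I_n * 'I_n | p.1 != p.2) X p.1 p.2 (a p)) /\
   (forall (h : L) (a : 'I_n * 'I_n -> R), in_H br X h ->
      h + \sum_(p : 'I_n * 'I_n | p.1 != p.2) X p.1 p.2 (a p) = 0 ->
      h = 0 /\ forall p : 'I_n * 'I_n, p.1 != p.2 -> X p.1 p.2 (a p) = 0)).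
Proof.
move=> n_ge3 _ stl; have [[bil jac] [rel _]] := stl.
split; first by split; [exact: in_H0 | split; [exact: in_H_lin | exact: in_H_br]].
split; first by move=> z; exact: in_H_center.
split; first by move=> i j h a ij; exact: in_H_br_X.
split; first exact: in_HX_all.
move=> h a hH ha0; have a0 := HX_direct stl hH ha0.
split; last by move=> p p_off; rewrite a0 // (X0 rel).
by move: ha0; rewrite -/(sumX X a) (sumX_eq0 rel a0) addr0.
Qed.
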